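(* There exists $\overline x>0$ such that $\mu(x)-rU(x)>0$ for $x\in[0,\overline x)$ and $\mu(x)-rU(x)<0$ for $x\in(\overline x,\infty)$. Moreover $\overline x\ge u^*$ and $\mathcal LU(m)-rU(m)>0$ for all $m\in[u^*,\overline x)$.
   Context: Let $\mu,\sigma$ be real functions defined on an interval $\mathcal I=(\alpha,\infty)$ with $-\infty\le\alpha<0$, with $\sigma>0$, and let $r>0$. Assume: $\mu$ and $\sigma$ are $C^1$ with Lipschitz derivatives, $\mu(0)>rU(0)$ and $\sup_{x\ge0}\mu'(x)<r$. The function $U:[0,\infty)\to[0,\infty)$ is nondecreasing, concave and twice continuously differentiable on $[0,\infty)$, and there is $u^*\ge0$ with $U'(m)\ge1$ for $m\le u^*$, $U'(m)=1$ for $m\ge u^*$, and $\mathcal LU(m)-rU(m)>0$ for all $m\in[0,u^* )$, where $\mathcal Lh(x)=\mu(x)h'(x)+\tfrac12\sigma^2(x)h''(x)$. *)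

From Stdlib Require Import Reals.
From Coquelicot Require Export Coquelicot.
Open Scope R_scope.

Definition in_I (alpha : Rbar) (x : R) : Prop := Rbar_lt alpha x.

Definition nbhs_nonneg (x : R) := within (fun y : R => 0 <= y) (locally x).

Definition is_derive_nonneg (f : R -> R) (x l : R) : Prop :=
  filterdiff f (nbhs_nonneg x) (fun h => scal h l).

Definition C1_lipschitz_deriv_on_I (alpha : Rbar) (f df : R -> R) : Prop :=
  (forall x, in_I alpha x -> is_derive f x (df x)) /\
  exists L : R, forall x y, in_I alpha x -> in_I alpha y ->
    Rabs (df x - df y) <= L * Rabs (x - y).

(* U is twice continuously differentiable on [0,+oo), with U' = U1, U'' = U2
   (one-sided derivatives at 0). *)
Definition C2_nonneg (U U1 U2 : R -> R) : Prop :=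
  (forall x, 0 <= x -> is_derive_nonneg U x (U1 x)) /\
  (forall x, 0 <= x -> is_derive_nonneg U1 x (U2 x)) /\
  (forall x, 0 <= x -> filterlim U2 (nbhs_nonneg x) (locally (U2 x))).

(* Generator L h(x) = mu(x) h'(x) + 1/2 sigma(x)^2 h''(x). *)
Definition gen (mu sigma h1 h2 : R -> R) (x : R) : R :=
  mu x * h1 x + / 2 * (sigma x) ^ 2 * h2 x.

From Stdlib Require Import Reals Lra.
From Coquelicot Require Import Coquelicot.
Open Scope R_scope.

(* Since U' >= 1 and mu' <= c < r on [0, oo), the function f = mu - r U
   decreases on (0, oo) at rate at least r - c.  It is positive near 0, so it
   changes sign exactly once, at xbar := sup {x >= 0 | f x > 0}.  For
   m >= ustar we have U' = 1 and hence U'' = 0, so L U - r U coincides with f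
   there; this gives positivity on [ustar, xbar).  If ustar > xbar, then
   L U - r U would be positive on [0, ustar) but equal to f ustar < 0 at ustar,
   contradicting its continuity. *)

#[local] Instance nbhs_nonneg_filter (x : R) : Filter (nbhs_nonneg x).
Proof. apply within_filter, locally_filter. Qed.

Lemma continuous_nbhs_nonneg (f : R -> R) (x : R) :
  continuous f x -> filterlim f (nbhs_nonneg x) (locally (f x)).
Proof. apply filterlim_filter_le_1, filter_le_within. Qed.

Lemma is_filter_lim_nbhs_nonneg (x : R) : is_filter_lim (nbhs_nonneg x) x.
Proof.
  apply (is_filter_lim_filter_le (F := locally x)).
  - apply filter_le_within.
  - intros P HP. exact HP.
Qed.

Lemma is_derive_nonneg_continuous (f : R -> R) (x l : R) :
  is_derive_nonneg f x l -> filterlim f (nbhs_nonneg x) (locally (f x)).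
Proof.
  intros Hf.
  apply (filterdiff_continuous_aux (K := R_AbsRing) (U := R_NormedModule)
           (V := R_NormedModule)).
  - exists (fun h => scal h l). exact Hf.
  - apply is_filter_lim_nbhs_nonneg.
Qed.

Lemma is_derive_nonneg_is_derive (f : R -> R) (x l : R) :
  0 < x -> is_derive_nonneg f x l -> is_derive f x l.
Proof.
  intros Hx [Hlin Hd]. split; [exact Hlin|].
  intros y Hy.
  apply (is_filter_lim_locally_unique (K := R_AbsRing) (V := R_NormedModule)) in Hy.
  subst y.
  intros eps.
  generalize (filter_and _ _ (open_gt 0 x Hx) (Hd x (is_filter_lim_nbhs_nonneg x) eps)).
  apply filter_imp. intros y [Hy Hy']. apply Hy'. lra.
Qed.

Lemma is_derive_nonneg_const_r (f : R -> R) (x l : R) :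
  0 <= x -> is_derive_nonneg f x l -> (forall y, x <= y -> f y = f x) -> l = 0.
Proof.
  intros Hx [_ Hd] Hconst.
  (* at x + d / 2 the increment of f vanishes, which forces |l| <= |l| / 2 *)
  destruct (Req_dec l 0) as [E|E]; [exact E|exfalso].
  assert (Hl : 0 < Rabs l / 2) by (pose proof (Rabs_pos_lt _ E); lra).
  destruct (Hd x (is_filter_lim_nbhs_nonneg x) (mkposreal _ Hl)) as [d Hdd].
  pose proof (cond_pos d).
  assert (Hball : ball x d (x + d / 2)).
  { change (Rabs (x + d / 2 - x) < d). rewrite Rabs_pos_eq; lra. }
  specialize (Hdd _ Hball ltac:(lra)). simpl in Hdd.
  rewrite Hconst in Hdd by lra.
  change (Rabs (f x - f x - (x + d / 2 - x) * l) <= Rabs l / 2 * Rabs (x + d / 2 - x))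
    in Hdd.
  replace (f x - f x - (x + d / 2 - x) * l) with (- (d / 2 * l)) in Hdd by ring.
  replace (x + d / 2 - x) with (d / 2) in Hdd by ring.
  rewrite Rabs_Ropp, Rabs_mult, (Rabs_pos_eq (d / 2)) in Hdd by lra.
  pose proof (Rabs_pos_lt _ E). nra.
Qed.

Section RealFilterlim.

Context {T : Type} {F : (T -> Prop) -> Prop} {FF : Filter F}.

Lemma filterlim_Rplus (f g : T -> R) (a b : R) :
  filterlim f F (locally a) -> filterlim g F (locally b) ->
  filterlim (fun x => f x + g x) F (locally (a + b)).
Proof.
  intros Hf Hg. apply (filterlim_comp_2 f g Rplus Hf Hg).
  apply (filterlim_plus (K := R_AbsRing) (V := R_NormedModule)).
Qed.

Lemma filterlim_Rminus (f g : T -> R) (a b : R) :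
  filterlim f F (locally a) -> filterlim g F (locally b) ->
  filterlim (fun x => f x - g x) F (locally (a - b)).
Proof.
  intros Hf Hg. apply (filterlim_Rplus f (fun x => - g x) a (- b) Hf).
  apply (filterlim_comp _ _ _ g Ropp F (locally b) (locally (- b)) Hg).
  apply (filterlim_opp (K := R_AbsRing) (V := R_NormedModule)).
Qed.

Lemma filterlim_Rmult (f g : T -> R) (a b : R) :
  filterlim f F (locally a) -> filterlim g F (locally b) ->
  filterlim (fun x => f x * g x) F (locally (a * b)).
Proof.
  intros Hf Hg. apply (filterlim_comp_2 f g Rmult Hf Hg).
  apply (filterlim_mult (K := R_AbsRing)).
Qed.

End RealFilterlim.

Lemma filterlim_gen (F : (R -> Prop) -> Prop) {FF : Filter F}
    (mu sigma h1 h2 : R -> R) (x : R) :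
  filterlim mu F (locally (mu x)) -> filterlim sigma F (locally (sigma x)) ->
  filterlim h1 F (locally (h1 x)) -> filterlim h2 F (locally (h2 x)) ->
  filterlim (gen mu sigma h1 h2) F (locally (gen mu sigma h1 h2 x)).
Proof.
  intros Hmu Hsigma Hh1 Hh2. unfold gen.
  apply filterlim_Rplus; [apply filterlim_Rmult; assumption|].
  apply filterlim_Rmult; [|assumption].
  apply filterlim_Rmult; [apply filterlim_const|].
  rewrite <- Rsqr_pow2.
  apply (filterlim_ext (fun y => sigma y * sigma y)); [intros y; apply Rsqr_pow2|].
  apply filterlim_Rmult; assumption.
Qed.

Lemma nbhs_nonneg_lim_ge0_of_pos_left (g : R -> R) (m l : R) :
  0 < m -> filterlim g (nbhs_nonneg m) (locally l) ->
  (forall y, 0 <= y < m -> 0 < g y) -> 0 <= l.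
Proof.
  intros Hm Hg Hpos. apply Rnot_lt_le. intros Hl.
  destruct (Hg _ (open_lt 0 l Hl)) as [d Hd].
  pose proof (cond_pos d).
  set (e := Rmin d m / 2).
  assert (He : 0 < e /\ e < d /\ e < m).
  { pose proof (Rmin_l d m). pose proof (Rmin_r d m).
    pose proof (Rmin_pos d m ltac:(lra) Hm). unfold e. lra. }
  assert (Hneg : g (m - e) < 0).
  { apply Hd; [|lra]. change (Rabs (m - e - m) < d).
    rewrite Rabs_left; lra. }
  pose proof (Hpos (m - e) ltac:(lra)). lra.
Qed.

Lemma slope_le_of_derive_le (f df : R -> R) (a b s : R) :
  a < b ->
  (forall x, a <= x <= b -> is_derive f x (df x)) ->
  (forall x, a <= x <= b -> df x <= s) ->
  f b - f a <= s * (b - a).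
Proof.
  intros Hab Hf Hdf.
  destruct (MVT_cor2 f df a b Hab) as [c [Hc Hcab]].
  - intros c Hc. apply is_derive_Reals, Hf, Hc.
  - rewrite Hc. apply Rmult_le_compat_r; [lra|]. apply Hdf. lra.
Qed.

Lemma exists_sign_change (f : R -> R) (k : R) :
  0 < k ->
  nbhs_nonneg 0 (fun x => 0 < f x) ->
  (forall a b, 0 < a -> a < b -> f b - f a <= - k * (b - a)) ->
  exists xbar, 0 < xbar /\
    (forall x, 0 <= x < xbar -> 0 < f x) /\ (forall x, xbar < x -> f x < 0).
Proof.
  intros Hk [d Hd] Hslope.
  pose proof (cond_pos d).
  set (a := d / 2).
  assert (Hnear : forall x, 0 <= x <= a -> 0 < f x).
  { intros x Hx. apply Hd; [|lra].
    change (Rabs (x - 0) < d). rewrite Rabs_pos_eq; unfold a in *; lra. }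
  assert (Hfa : 0 < f a) by (apply Hnear; unfold a; lra).
  set (S := fun x => 0 <= x /\ 0 < f x).
  destruct (completeness S) as [xbar [Hub Hlub]].
  - (* beyond a, f loses at least k per unit length *)
    exists (a + f a / k). intros x [Hx Hfx].
    assert (Hdiv : k * (f a / k) = f a) by (field; lra).
    destruct (Rle_or_lt x a) as [Hxa|Hxa].
    + assert (0 < f a / k) by (apply Rdiv_lt_0_compat; lra). lra.
    + pose proof (Hslope a x ltac:(unfold a; lra) Hxa). nra.
  - exists 0. split; [lra|]. apply Hnear. unfold a. lra.
  - assert (Ha : a <= xbar) by (apply Hub; split; [unfold a; lra|exact Hfa]).
    exists xbar. split; [unfold a in Ha; lra|split].
    + intros x Hx. destruct (Rle_or_lt x a) as [Hxa|Hxa]; [apply Hnear; lra|].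
      destruct (Rlt_or_le 0 (f x)) as [|Hfx]; [assumption|exfalso].
      assert (xbar <= x); [|lra].
      apply Hlub. intros y [Hy Hfy].
      destruct (Rle_or_lt y x) as [|Hxy]; [assumption|].
      pose proof (Hslope x y ltac:(unfold a in Hxa; lra) Hxy). nra.
    + intros x Hx. set (m := (xbar + x) / 2).
      assert (Hfm : f m <= 0).
      { destruct (Rle_or_lt (f m) 0) as [|Hfm]; [assumption|].
        assert (m <= xbar) by (apply Hub; split; [unfold m, a in *; lra|exact Hfm]).
        unfold m in *. lra. }
      pose proof (Hslope m x ltac:(unfold m, a in *; lra) ltac:(unfold m; lra)).
      unfold m in *. nra.
Qed.

Lemma in_I_of_nonneg (alpha : Rbar) (x : R) :
  Rbar_lt alpha 0 -> 0 <= x -> in_I alpha x.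
Proof. unfold in_I. destruct alpha; simpl; intros; try lra; tauto. Qed.

Lemma C1_lipschitz_deriv_on_I_nbhs_nonneg (alpha : Rbar) (f df : R -> R) (x : R) :
  Rbar_lt alpha 0 -> C1_lipschitz_deriv_on_I alpha f df -> 0 <= x ->
  filterlim f (nbhs_nonneg x) (locally (f x)).
Proof.
  intros Halpha [Hd _] Hx. apply continuous_nbhs_nonneg.
  apply (ex_derive_continuous (K := R_AbsRing) (V := R_NormedModule)).
  exists (df x). apply Hd, in_I_of_nonneg; assumption.
Qed.

Section Drift.

Variables (alpha : Rbar) (mu sigma dmu dsigma U U1 U2 : R -> R) (r : R).
Hypothesis Halpha : Rbar_lt alpha 0.
Hypothesis Hmu : C1_lipschitz_deriv_on_I alpha mu dmu.
Hypothesis Hsig : C1_lipschitz_deriv_on_I alpha sigma dsigma.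
Hypothesis HU : C2_nonneg U U1 U2.

Lemma filterlim_mu_sub_rU (m : R) : 0 <= m ->
  filterlim (fun x => mu x - r * U x) (nbhs_nonneg m) (locally (mu m - r * U m)).
Proof.
  intros Hm. destruct HU as [HdU _].
  apply filterlim_Rminus.
  - apply (C1_lipschitz_deriv_on_I_nbhs_nonneg alpha mu dmu); assumption.
  - apply filterlim_Rmult; [apply filterlim_const|].
    apply (is_derive_nonneg_continuous U m (U1 m)), HdU, Hm.
Qed.

Lemma filterlim_gen_sub_rU (m : R) : 0 <= m ->
  filterlim (fun x => gen mu sigma U1 U2 x - r * U x) (nbhs_nonneg m)
    (locally (gen mu sigma U1 U2 m - r * U m)).
Proof.
  intros Hm. destruct HU as [HdU [HdU1 HcU2]].
  apply filterlim_Rminus;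
    [apply (filterlim_gen (nbhs_nonneg m))|apply filterlim_Rmult].
  - apply (C1_lipschitz_deriv_on_I_nbhs_nonneg alpha mu dmu); assumption.
  - apply (C1_lipschitz_deriv_on_I_nbhs_nonneg alpha sigma dsigma); assumption.
  - apply (is_derive_nonneg_continuous U1 m (U2 m)), HdU1, Hm.
  - apply HcU2, Hm.
  - apply filterlim_const.
  - apply (is_derive_nonneg_continuous U m (U1 m)), HdU, Hm.
Qed.

Lemma mu_sub_rU_slope_le (c : R) :
  0 <= r -> (forall x, 0 <= x -> dmu x <= c) -> (forall x, 0 <= x -> 1 <= U1 x) ->
  forall a b, 0 < a -> a < b ->
  (mu b - r * U b) - (mu a - r * U a) <= - (r - c) * (b - a).
Proof.
  intros Hr Hdmu HU1 a b Ha Hab. destruct HU as [HdU _].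
  apply (slope_le_of_derive_le (fun x => mu x - r * U x) (fun x => dmu x - r * U1 x));
    [exact Hab| |].
  - intros x Hx. apply (is_derive_minus mu (fun y => r * U y)).
    + apply (proj1 Hmu), in_I_of_nonneg; [exact Halpha|lra].
    + apply is_derive_scal, is_derive_nonneg_is_derive, HdU; lra.
  - intros x Hx. pose proof (Hdmu x ltac:(lra)). pose proof (HU1 x ltac:(lra)). nra.
Qed.

Lemma gen_eq_mu_of_U1_eq1 (ustar : R) : 0 <= ustar ->
  (forall m, ustar <= m -> U1 m = 1) ->
  forall m, ustar <= m -> gen mu sigma U1 U2 m = mu m.
Proof.
  intros Hustar HU1 m Hm. destruct HU as [_ [HdU1 _]].
  assert (HU2 : U2 m = 0).
  { apply (is_derive_nonneg_const_r U1 m); [lra|apply HdU1; lra|].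
    intros y Hy. rewrite !HU1; lra. }
  unfold gen. rewrite HU1, HU2 by lra. ring.
Qed.

End Drift.

Theorem lemma2
  (alpha : Rbar) (mu sigma dmu dsigma U U1 U2 : R -> R) (r ustar : R)
  (Halpha : Rbar_lt alpha 0)
  (Hsigma_pos : forall x, in_I alpha x -> 0 < sigma x)
  (Hr : 0 < r)
  (Hmu : C1_lipschitz_deriv_on_I alpha mu dmu)
  (Hsig : C1_lipschitz_deriv_on_I alpha sigma dsigma)
  (Hmu0 : mu 0 > r * U 0)
  (Hsup : exists c, c < r /\ forall x, 0 <= x -> dmu x <= c)
  (HU_nonneg : forall x, 0 <= x -> 0 <= U x)
  (HU_mono : forall x y, 0 <= x -> x <= y -> U x <= U y)
  (HU_concave : forall x y t, 0 <= x -> 0 <= y -> 0 <= t <= 1 ->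
      t * U x + (1 - t) * U y <= U (t * x + (1 - t) * y))
  (HU_C2 : C2_nonneg U U1 U2)
  (Hustar : 0 <= ustar)
  (HU1_le : forall m, 0 <= m <= ustar -> 1 <= U1 m)
  (HU1_ge : forall m, ustar <= m -> U1 m = 1)
  (HLU : forall m, 0 <= m < ustar -> gen mu sigma U1 U2 m - r * U m > 0) :
  exists xbar, 0 < xbar /\
    (forall x, 0 <= x < xbar -> mu x - r * U x > 0) /\
    (forall x, xbar < x -> mu x - r * U x < 0) /\
    ustar <= xbar /\
    (forall m, ustar <= m < xbar -> gen mu sigma U1 U2 m - r * U m > 0).
Proof.
  destruct Hsup as [c [Hcr Hdmu]].
  assert (HU1 : forall m, 0 <= m -> 1 <= U1 m).
  { intros m Hm. destruct (Rle_or_lt m ustar).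
    - apply HU1_le. lra.
    - rewrite HU1_ge; lra. }
  pose proof (gen_eq_mu_of_U1_eq1 mu sigma U U1 U2 HU_C2 ustar Hustar HU1_ge) as Hgen.
  destruct (exists_sign_change (fun x => mu x - r * U x) (r - c))
    as [xbar [Hxbar [Hpos Hneg]]].
  - lra.
  - apply (filterlim_mu_sub_rU alpha mu dmu U U1 U2 r Halpha Hmu HU_C2 0);
      [lra|apply open_gt; lra].
  - exact (mu_sub_rU_slope_le alpha mu dmu U U1 U2 r Halpha Hmu HU_C2 c
             ltac:(lra) Hdmu HU1).
  - assert (Hus : ustar <= xbar).
    { apply Rnot_lt_le. intros Hlt.
      assert (Hge : 0 <= gen mu sigma U1 U2 ustar - r * U ustar).
      { apply (nbhs_nonneg_lim_ge0_of_pos_left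
                 (fun m => gen mu sigma U1 U2 m - r * U m) ustar); [lra| |exact HLU].
        apply (filterlim_gen_sub_rU alpha mu sigma dmu dsigma); assumption. }
      rewrite Hgen in Hge by lra. specialize (Hneg ustar Hlt). lra. }
    exists xbar. split; [exact Hxbar|]. split; [exact Hpos|]. split; [exact Hneg|].
    split; [exact Hus|].
    intros m Hm. rewrite Hgen by lra. apply Hpos. lra.
Qed.
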